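(* Let $G$ be a graph with a clique cutset $C$, and let $V(G)\setminus C$ be partitioned into two sets $V_1,V_2$ such that there are no edges between $V_1$ and $V_2$. If $G[C\cup V_1]$ is perfect, then $G$ is not minimally non-perfectly divisible.
   Context: All graphs are finite and simple. For $S\subseteq V(G)$, $G[S]$ is the subgraph induced by $S$. $\omega(G)$ is the number of vertices in a largest clique of $G$ and $\chi(G)$ the chromatic number. A graph $G$ is perfect if $\chi(H)=\omega(H)$ for every induced subgraph $H$ of $G$. A partition $(A,B)$ of $V(G)$ is good if $G[A]$ is perfect and $\omega(G[B])<\omega(G)$. A graph $G$ is perfectly divisible if every induced subgraph $H$ of $G$ with at least one edge admits a good partition (of $V(H)$). A graph is minimally non-perfectly divisible if it is not perfectly divisible but each of its proper induced subgraphs is perfectly divisible. A set $C\subseteq V(G)$ is a clique cutset if $C$ induces a clique in $G$ and $G-C$ is disconnected. *)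

(* A simple graph is a symmetric irreflexive relation e on a
   finType T; induced subgraphs G[S] are given by vertex sets S : {set T}. *)
From mathcomp Require Import all_boot.
Set Implicit Arguments. Unset Strict Implicit. Unset Printing Implicit Defensive.

Section Graphs.
Variables (T : finType) (e : rel T).

Definition simple_graph : Prop := symmetric e /\ irreflexive e.

Definition is_clique (K : {set T}) : bool :=
  [forall x in K, forall y in K, (x != y) ==> e x y].

Definition omega (S : {set T}) : nat :=
  \max_(K : {set T} | (K \subset S) && is_clique K) #|K|.

Definition colorable (S : {set T}) (k : nat) : bool :=
  [exists f : {ffun T -> 'I_(#|T|.+1)},
     [forall x in S, f x < k] &&
     [forall x in S, forall y in S, e x y ==> (f x != f y)]].

(* chi(G[S]) : least k such that G[S] is k-colourable
   (G[S] is always #|T|-colourable) *)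
Definition chi (S : {set T}) : nat :=
  \big[minn/#|T|]_(k < #|T|.+1 | colorable S k) k.

Definition perfect (S : {set T}) : Prop :=
  forall H : {set T}, H \subset S -> chi H = omega H.

Definition has_edge (S : {set T}) : Prop :=
  exists x y, [/\ x \in S, y \in S & e x y].

Definition good_partition (S A B : {set T}) : Prop :=
  [/\ A :|: B = S, A :&: B = set0, perfect A & omega B < omega S].

Definition perfectly_divisible (S : {set T}) : Prop :=
  forall H : {set T}, H \subset S -> has_edge H ->
    exists A B : {set T}, good_partition H A B.

Definition minimally_non_pd : Prop :=
  ~ perfectly_divisible [set: T] /\
  forall H : {set T}, H \proper [set: T] -> perfectly_divisible H.

Definition clique_cutset (C : {set T}) : Prop :=
  is_clique C /\
  exists x y, [/\ x \notin C, y \notin C &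
    ~~ connect [rel u v | [&& e u v, u \notin C & v \notin C]] x y].

End Graphs.

(* Suppose G were minimally non-perfectly divisible.  The proper induced
   subgraph G[C ∪ V2] then has a good partition (A, B) (the trivial one
   (C ∪ V2, ∅) if it has no edge), and (V1 ∪ A, B) is a good partition of G:
   ω(B) < ω(C ∪ V2) ≤ ω(G), and G[V1 ∪ A] is perfect, being glued from the
   perfect graphs G[V1 ∪ (C ∩ A)] and G[A] along the clique C ∩ A with no
   edges across.  Such a clique sum is perfect because optimal colourings of
   the two sides can be combined once the colours of one side are permuted to
   agree with the other on the clique.  As all proper induced subgraphs are
   perfectly divisible, G would be perfectly divisible. *)

From Pilot Require Import Defs.
From mathcomp Require Import all_boot perm.
Set Implicit Arguments. Unset Strict Implicit. Unset Printing Implicit Defensive.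

Lemma perm_align (aT cT : finType) (D : {pred cT}) (Q : {pred aT}) (f g : aT -> cT) :
    {in Q &, injective f} -> {in Q &, injective g} ->
    {in Q, forall q, f q \in D} -> {in Q, forall q, g q \in D} ->
  exists s : {perm cT}, {in D, forall c, s c \in D} /\ {in Q, forall q, s (g q) = f q}.
Proof.
move=> injf injg fD gD.
suff /(_ (enum Q)) [|s [sD sfg]] : forall r : seq aT, {subset r <= Q} -> exists s : {perm cT},
    {in D, forall c, s c \in D} /\ {in r, forall q, s (g q) = f q}.
- by move=> q; rewrite mem_enum.
- by exists s; split=> // q qQ; rewrite sfg ?mem_enum.
elim=> [|q r IH] rQ; first by exists 1%g; split=> c; rewrite perm1.
have qQ : q \in Q by rewrite rQ ?mem_head.
have [s [sD sfg]] := IH (fun x xr => rQ x (mem_behead (s := q :: r) xr)).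
exists (s * tperm (s (g q)) (f q))%g; split=> [c cD|q' q'r]; rewrite permM.
  by case: tpermP => *; rewrite ?fD ?sD ?gD.
have q'Q : q' \in Q by rewrite rQ.
have [-> | nq'q] := eqVneq q' q; first by rewrite tpermL.
move: q'r; rewrite inE (negbTE nq'q) /= => q'r.
rewrite (sfg q') // tpermD //.
  by rewrite -(sfg q') // (inj_eq perm_inj) (inj_in_eq injg) // eq_sym.
by rewrite (inj_in_eq injf) // eq_sym.
Qed.

Lemma card_ord_lt n k (A : {set 'I_n}) : {in A, forall c : 'I_n, c < k} -> #|A| <= k.
Proof.
move=> ltA; rewrite cardE -(size_map val) -(size_iota 0 k).
apply: uniq_leq_size; first by rewrite (map_inj_uniq val_inj) enum_uniq.
by move=> _ /mapP[c cA ->]; rewrite mem_iota ltA // -mem_enum.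
Qed.

Section Graphs.
Variables (T : finType) (e : rel T).
Hypotheses (e_sym : symmetric e) (e_irr : irreflexive e).
Implicit Types S A B H K X Y : {set T}.

Local Notation color := 'I_#|T|.+1.
Local Notation omega := (omega e).
Local Notation chi := (chi e).
Local Notation colorable := (colorable e).
Local Notation is_clique := (is_clique e).
Local Notation perfect := (perfect e).

Lemma omegaS A B : A \subset B -> omega A <= omega B.
Proof.
move=> AB; apply/bigmax_leqP => K /andP[KA clK]; apply: leq_bigmax_cond.
by rewrite (subset_trans KA AB) clK.
Qed.

Lemma omega_gt0 S x : x \in S -> 0 < omega S.
Proof.
move=> xS; rewrite -(cards1 x); apply: leq_bigmax_cond.
rewrite sub1set xS; apply/forall_inP => u /set1P ->.
by apply/forall_inP => v /set1P ->; rewrite eqxx.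
Qed.

Lemma omega_set0 : omega set0 = 0.
Proof.
apply/eqP; rewrite -leqn0; apply/bigmax_leqP => K /andP[].
by rewrite subset0 => /eqP -> _; rewrite cards0.
Qed.

Lemma omega_le_card S : omega S <= #|T|.
Proof. by apply/bigmax_leqP => K _; apply: max_card. Qed.

Definition proper_coloring (S : {set T}) (k : nat) (f : T -> color) : Prop :=
  {in S, forall x, f x < k} /\ {in S &, forall x y, e x y -> f x != f y}.

Lemma colorableP S k : reflect (exists f, proper_coloring S k f) (colorable S k).
Proof.
apply: (iffP existsP) => [[f /andP[/forall_inP lt_f /forall_inP pr_f]]|[f [lt_f pr_f]]].
  exists f; split=> // x y xS yS; exact/implyP/(forall_inP (pr_f x xS)).
exists (finfun f); apply/andP; split; apply/forall_inP => x xS; rewrite ?ffunE.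
  exact: lt_f.
by apply/forall_inP => y yS; apply/implyP; rewrite !ffunE; apply: pr_f.
Qed.

Lemma colorableW S k l : colorable S k -> k <= l -> colorable S l.
Proof.
move=> /colorableP[f [lt_f pr_f]] kl; apply/colorableP; exists f; split=> // x xS.
exact: leq_trans (lt_f x xS) kl.
Qed.

Lemma colorable_card S : colorable S #|T|.
Proof.
apply/colorableP; exists (fun x => widen_ord (leqnSn _) (enum_rank x)).
split=> [x _|x y _ _ exy]; first exact: ltn_ord (enum_rank x).
apply: contraTneq exy => /(congr1 val) /= /val_inj /enum_rank_inj ->.
by rewrite e_irr.
Qed.

Lemma chi_min S k : colorable S k -> k <= #|T| -> chi S <= k.
Proof.
move=> ck kT; rewrite /Defs.chi.
have : Ordinal (kT : k < #|T|.+1) \in index_enum 'I_#|T|.+1 by rewrite mem_index_enum.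
elim: (index_enum _) => [//|j r IH]; rewrite big_cons inE => /orP[/eqP <-|jr].
  by rewrite ck geq_minl.
case: ifP => _; last exact: IH.
exact: leq_trans (geq_minr _ _) (IH jr).
Qed.

Lemma chi_colorable S : colorable S (chi S).
Proof.
rewrite /Defs.chi; apply: (big_ind (colorable S)) => //; first exact: colorable_card.
by move=> a b ca cb; rewrite /minn; case: ltnP.
Qed.

Lemma proper_coloring_inj_clique S k f K :
  proper_coloring S k f -> is_clique K -> K \subset S -> {in K &, injective f}.
Proof.
move=> [_ pr_f] /forall_inP clK /subsetP KS x y xK yK fxy; apply/eqP.
apply: contraT => nxy; have := pr_f x y (KS x xK) (KS y yK).
by rewrite fxy eqxx; apply; apply: (implyP (forall_inP (clK x xK) y yK)).
Qed.

Lemma omega_le_chi S : omega S <= chi S.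
Proof.
apply/bigmax_leqP => K /andP[KS clK].
have /colorableP[f col_f] := chi_colorable S.
rewrite -(card_in_imset (proper_coloring_inj_clique col_f clK KS)).
by apply: card_ord_lt => _ /imsetP[x xK ->]; apply: col_f.1; apply: (subsetP KS).
Qed.

Lemma colorable_omega S : colorable S (omega S) -> chi S = omega S.
Proof.
move=> col; apply/eqP; rewrite eqn_leq omega_le_chi andbT.
exact: chi_min col (omega_le_card S).
Qed.

Lemma is_cliqueS A B : B \subset A -> is_clique A -> is_clique B.
Proof.
move=> /subsetP BA /forall_inP clA; apply/forall_inP => x xB.
by apply/forall_inP => y yB; apply: (forall_inP (clA x (BA x xB))); apply: BA.
Qed.

Lemma perfectS A B : B \subset A -> perfect A -> perfect B.
Proof. by move=> BA pA H HB; apply: pA (subset_trans HB BA). Qed.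

Lemma has_edgeP S : reflect (has_edge e S) [exists x in S, exists y in S, e x y].
Proof.
apply: (iffP exists_inP) => [[x xS /exists_inP[y yS exy]]|[x [y [xS yS exy]]]].
  by exists x, y.
by exists x => //; apply/exists_inP; exists y.
Qed.

Lemma perfect_edgeless S : ~ has_edge e S -> perfect S.
Proof.
move=> noE H HS; apply: colorable_omega; apply/colorableP; exists (fun=> ord0).
split=> [x xH|x y xH yH exy]; first exact: omega_gt0 xH.
by case: noE; exists x, y; rewrite exy !(subsetP HS).
Qed.

Section CliqueSum.
Variables X Y : {set T}.
Hypothesis clXY : is_clique (X :&: Y).
Hypothesis sepXY : forall x y, x \in X :\: Y -> y \in Y :\: X -> ~~ e x y.

Lemma edge_clique_sum x y : x \in X :|: Y -> y \in X :|: Y -> e x y ->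
  (x \in X) && (y \in X) || (x \in Y) && (y \in Y).
Proof.
move=> + + exy; move: (@sepXY x y) (@sepXY y x); rewrite !inE [e y x]e_sym exy.
by case: (x \in X); case: (x \in Y); case: (y \in X); case: (y \in Y); auto.
Qed.

Lemma colorable_clique_sum k : colorable X k -> colorable Y k -> colorable (X :|: Y) k.
Proof.
move=> /colorableP[f col_f] /colorableP[g col_g].
have [s [s_lt s_fg]] : exists s : {perm color},
    {in [pred c : color | c < k], forall c, s c < k} /\
    {in X :&: Y, forall q, s (g q) = f q}.
  apply: perm_align.
  - exact: proper_coloring_inj_clique col_f clXY (subsetIl X Y).
  - exact: proper_coloring_inj_clique col_g clXY (subsetIr X Y).
  - by move=> q /setIP[qX _]; apply: col_f.1.
  - by move=> q /setIP[_ qY]; apply: col_g.1.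
pose h v := if v \in X then f v else s (g v).
have hY : {in Y, forall v, h v = s (g v)}.
  by move=> v vY; rewrite /h; case: ifP => // vX; rewrite s_fg // inE vX.
apply/colorableP; exists h; split=> [v|x y xXY yXY exy].
  rewrite /h inE; case: ifP => [vX _|_ /= vY]; first exact: col_f.1.
  exact/s_lt/col_g.1.
case/orP: (edge_clique_sum xXY yXY exy) => /andP[xZ yZ].
  by rewrite /h xZ yZ; apply: col_f.2.
by rewrite !hY // (inj_eq perm_inj); apply: col_g.2.
Qed.

End CliqueSum.

Lemma perfect_clique_sum X Y :
    is_clique (X :&: Y) ->
    (forall x y, x \in X :\: Y -> y \in Y :\: X -> ~~ e x y) ->
  perfect X -> perfect Y -> perfect (X :|: Y).
Proof.
move=> clXY sepXY pX pY H HXY; apply: colorable_omega.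
have -> : H = (H :&: X) :|: (H :&: Y) by rewrite -setIUr; apply/esym/setIidPl.
apply: colorable_clique_sum.
- by apply: is_cliqueS clXY; rewrite setIACA setIid subsetIr.
- move=> x y /setDP[/setIP[xH xX] xHY] /setDP[/setIP[yH yY] yHX].
  by rewrite !inE xH yH /= in xHY yHX; apply: sepXY; rewrite inE ?xX ?yY ?andbT.
- apply: colorableW (chi_colorable _) _.
  by rewrite pX ?subsetIr // omegaS // subsetUl.
- apply: colorableW (chi_colorable _) _.
  by rewrite pY ?subsetIr // omegaS // subsetUr.
Qed.

Lemma pd_good_partition S :
  perfectly_divisible e S -> S != set0 -> exists A B, good_partition e S A B.
Proof.
move=> pdS /set0Pn[x xS]; have [edgeS|noE] := has_edgeP S.
  exact: pdS (subxx S) edgeS.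
exists S, set0; split; rewrite ?setU0 ?setI0 ?omega_set0 ?(omega_gt0 xS) //.
exact: perfect_edgeless.
Qed.

Lemma perfectly_divisible_of_proper S :
    (forall H, H \proper S -> perfectly_divisible e H) ->
    (exists A B, good_partition e S A B) ->
  perfectly_divisible e S.
Proof.
move=> pd_proper gpS H HS edgeH; have [-> //|nHS] := eqVneq H S.
by apply: pd_proper (subxx H) edgeH; rewrite properEneq nHS HS.
Qed.

Section CliqueCutset.
Variables C V1 V2 : {set T}.
Hypotheses (clC : is_clique C) (cover : C :|: V1 :|: V2 = [set: T]).
Hypotheses (dCV1 : [disjoint C & V1]) (dV12 : [disjoint V1 & V2]).
Hypothesis noE12 : forall x y, x \in V1 -> y \in V2 -> ~~ e x y.
Hypothesis pCV1 : perfect (C :|: V1).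

Lemma V1_notin_CV2 v : v \in V1 -> (v \in C :|: V2) = false.
Proof. by move=> vV1; rewrite inE (disjointFl dCV1 vV1) (disjointFr dV12 vV1). Qed.

Lemma perfect_V1U A : A \subset C :|: V2 -> perfect A -> perfect (V1 :|: A).
Proof.
move=> /subsetP AY pA.
have -> : V1 :|: A = (V1 :|: C :&: A) :|: A by rewrite -setUA (setUidPr (subsetIr C A)).
apply: perfect_clique_sum pA.
- apply: is_cliqueS clC; apply/subsetP => x; rewrite !inE => /andP[/orP[xV1|/andP[//]] xA].
  by move: (V1_notin_CV2 xV1); rewrite AY.
- move=> x y; rewrite !inE => /andP[xA xV1] /andP[yV1C yA].
  rewrite yA andbT in yV1C; case/norP: yV1C => _ yC.
  have := AY y yA; rewrite inE (negbTE yC) => yV2.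
  by case/orP: xV1 xA => [xV1 _|/andP[_ ->] //]; apply: noE12.
- by apply: perfectS pCV1; rewrite setUC; apply: setSU; apply: subsetIl.
Qed.

Lemma good_partition_extend A B :
  good_partition e (C :|: V2) A B -> good_partition e [set: T] (V1 :|: A) B.
Proof.
move=> [AB AiB pA ltB]; split.
- by rewrite -setUA AB setUCA setUA.
- rewrite setIUl AiB setU0; apply/setP => v; rewrite !inE.
  by apply/negbTE/andP => -[vV1 vB]; move: (V1_notin_CV2 vV1); rewrite -AB inE vB orbT.
- by apply: perfect_V1U pA; rewrite -AB subsetUl.
- exact: leq_trans ltB (omegaS (subsetT _)).
Qed.

End CliqueCutset.

End Graphs.

Theorem lemma4 (T : finType) (e : rel T) (C V1 V2 : {set T}) :
  simple_graph e ->
  clique_cutset e C ->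
  V1 != set0 -> V2 != set0 ->
  C :|: V1 :|: V2 = [set: T] ->
  [disjoint C & V1] -> [disjoint C & V2] -> [disjoint V1 & V2] ->
  (forall x y, x \in V1 -> y \in V2 -> ~~ e x y) ->
  perfect e (C :|: V1) ->
  ~ minimally_non_pd e.
Proof.
move=> [e_sym e_irr] [clC _] /set0Pn[v1 v1V1] /set0Pn[v2 v2V2] cover dCV1 _ dV12 noE12 pCV1.
move=> [not_pd pd_proper].
have CV2_proper : C :|: V2 \proper [set: T].
  by rewrite properT; apply: contraFneq (V1_notin_CV2 dCV1 dV12 v1V1) => ->.
have CV2_nonempty : C :|: V2 != set0 by apply/set0Pn; exists v2; rewrite inE v2V2 orbT.
have [A [B gpY]] := pd_good_partition e_irr (pd_proper _ CV2_proper) CV2_nonempty.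
apply/not_pd/perfectly_divisible_of_proper => //; exists (V1 :|: A), B.
exact: (good_partition_extend e_sym e_irr clC cover dCV1 dV12 noE12 pCV1 gpY).
Qed.
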